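(* Let $I\ge 3$ and let $P=(p_{i,j})$ be any $I\times I$ matrix of the form $P=\alpha cr^t+(1-\alpha)\,\mathrm{diag}(\tfrac1I,\dots,\tfrac1I)$ with $r,c\in\mathbb{R}^I_{\ge0}$ each having entries summing to $1$ and $\alpha\in[0,1]$ (the common-diagonal-effect model in mixture form). Then each of the following polynomials vanishes at $P$: (a) for $i,j,k,l$ all distinct, $b_{ijkl}=p_{i,j}p_{k,l}-p_{i,l}p_{k,j}$; (b) for $i,j,k$ all distinct, $t_{ijk}=p_{i,j}p_{j,k}p_{k,i}-p_{i,k}p_{k,j}p_{j,i}$; (c) for two distinct pairs $(i,j)\ne(k,l)$ with $i\ne j$, $k\ne l$, and indices $m\in\{1,\dots,I\}\setminus\{i,j\}$, $n\in\{1,\dots,I\}\setminus\{k,l\}$ with $m\ne n$, $f_{ijklmn}=p_{i,j}p_{k,l}p_{n,n}-p_{i,j}p_{n,l}p_{k,n}-p_{i,j}p_{k,l}p_{m,m}+p_{k,l}p_{m,j}p_{i,m}$; (d) for distinct $i,j$ and $k\in\{1,\dots,I\}\setminus\{i,j\}$, $g_{ijk}=p_{i,j}p_{i,i}p_{k,k}+p_{i,j}p_{j,j}p_{k,k}-p_{i,j}p_{i,i}p_{j,j}-p_{i,j}p_{k,k}p_{k,k}+p_{k,k}p_{i,k}p_{k,j}-p_{i,i}p_{i,k}p_{k,j}+p_{i,j}^2p_{j,i}-p_{i,j}p_{k,j}p_{j,k}$; (e) for $i,j,k$ all distinct, $h_{ijk}=p_{i,i}p_{j,j}^2+p_{i,i}^2p_{k,k}+p_{j,j}p_{k,k}^2-p_{i,i}^2p_{j,j}-p_{j,j}^2p_{k,k}-p_{i,i}p_{k,k}^2+p_{i,i}p_{i,j}p_{j,i}-p_{i,i}p_{i,k}p_{k,i}+p_{j,j}p_{j,k}p_{k,j}-p_{j,j}p_{j,i}p_{i,j}+p_{k,k}p_{k,i}p_{i,k}-p_{k,k}p_{k,j}p_{j,k}$.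 That is, all these polynomials are invariants of the common-diagonal-effect model in mixture form.
   Context: An invariant of a model is a polynomial in the entries $p_{i,j}$ that vanishes at every point of the model. *)

From HB Require Import structures.
From mathcomp Require Import all_boot all_order all_algebra.
Set Implicit Arguments. Unset Strict Implicit. Unset Printing Implicit Defensive.
Import Order.TTheory GRing.Theory Num.Theory.
Local Open Scope ring_scope.

Definition cde_mixture (R : realFieldType) (n : nat)
    (alpha : R) (c r : 'cV[R]_n) : 'M[R]_n :=
  alpha *: (c *m r^T) + (1 - alpha) *: (n%:R^-1)%:M.

Definition prob_vec (R : realFieldType) (n : nat) (v : 'cV[R]_n) : Prop :=
  (forall i, 0 <= v i ord0) /\ \sum_(i < n) v i ord0 = 1.

Section Polys.
Variables (R : realFieldType) (n : nat) (P : 'M[R]_n).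
Local Notation p := (fun a b => P a b).

Definition b_poly (i j k l : 'I_n) : R :=
  p i j * p k l - p i l * p k j.

Definition t_poly (i j k : 'I_n) : R :=
  p i j * p j k * p k i - p i k * p k j * p j i.

Definition f_poly (i j k l m n' : 'I_n) : R :=
  p i j * p k l * p n' n' - p i j * p n' l * p k n'
  - p i j * p k l * p m m + p k l * p m j * p i m.

Definition g_poly (i j k : 'I_n) : R :=
  p i j * p i i * p k k + p i j * p j j * p k k - p i j * p i i * p j j
  - p i j * p k k * p k k + p k k * p i k * p k j - p i i * p i k * p k j
  + p i j ^+ 2 * p j i - p i j * p k j * p j k.

Definition h_poly (i j k : 'I_n) : R :=
  p i i * p j j ^+ 2 + p i i ^+ 2 * p k k + p j j * p k k ^+ 2
  - p i i ^+ 2 * p j j - p j j ^+ 2 * p k k - p i i * p k k ^+ 2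
  + p i i * p i j * p j i - p i i * p i k * p k i
  + p j j * p j k * p k j - p j j * p j i * p i j
  + p k k * p k i * p i k - p k k * p k j * p j k.
End Polys.

From HB Require Import structures.
From mathcomp Require Import all_boot all_order all_algebra.
From mathcomp Require Import ring.
Import Order.TTheory GRing.Theory Num.Theory.
Local Open Scope ring_scope.

(* Off the diagonal a matrix [x y^T + d I] is the rank-one matrix [x y^T],
   so every product of off-diagonal entries only depends on the multiset of
   row indices and the multiset of column indices involved; each polynomial
   pairs its monomials so that these multisets agree, and the diagonal
   entries x_a y_a + d enter in combinations where d cancels.  None of the
   constraints on alpha, c and r is needed. *)

Section RankOnePlusScalar.
Variables (R : realFieldType) (n : nat) (x y : 'cV[R]_n) (d : R).
Local Notation P := (x *m y^T + d%:M).

Lemma rank1_scalar_diag (a : 'I_n) : P a a = x a ord0 * y a ord0 + d.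
Proof. by rewrite !mxE big_ord1 !mxE eqxx mulr1n. Qed.

Lemma rank1_scalar_offdiag (a b : 'I_n) : a != b -> P a b = x a ord0 * y b ord0.
Proof. by move=> /negbTE ab; rewrite !mxE big_ord1 !mxE ab mulr0n addr0. Qed.

Lemma b_poly_rank1_scalar (i j k l : 'I_n) :
  i != j -> k != l -> i != l -> k != j -> b_poly P i j k l = 0.
Proof.
move=> ij kl il kj; rewrite /b_poly !rank1_scalar_offdiag //.
ring.
Qed.

Lemma t_poly_rank1_scalar (i j k : 'I_n) :
  i != j -> j != k -> k != i -> t_poly P i j k = 0.
Proof.
move=> ij jk ki; rewrite /t_poly !rank1_scalar_offdiag.
all: try by rewrite // eq_sym.
ring.
Qed.

Lemma f_poly_rank1_scalar (i j k l m n' : 'I_n) :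
  i != j -> k != l -> m \notin [:: i; j] -> n' \notin [:: k; l] ->
  f_poly P i j k l m n' = 0.
Proof.
rewrite !inE !negb_or => ij kl /andP[mi mj] /andP[nk nl].
rewrite /f_poly !rank1_scalar_diag !rank1_scalar_offdiag.
all: try by rewrite // eq_sym.
ring.
Qed.

Lemma g_poly_rank1_scalar (i j k : 'I_n) :
  i != j -> k \notin [:: i; j] -> g_poly P i j k = 0.
Proof.
rewrite !inE !negb_or => ij /andP[ki kj].
rewrite /g_poly !rank1_scalar_diag !rank1_scalar_offdiag.
all: try by rewrite // eq_sym.
ring.
Qed.

Lemma h_poly_rank1_scalar (i j k : 'I_n) :
  i != j -> j != k -> k != i -> h_poly P i j k = 0.
Proof.
move=> ij jk ki; rewrite /h_poly !rank1_scalar_diag !rank1_scalar_offdiag.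
all: try by rewrite // eq_sym.
ring.
Qed.

End RankOnePlusScalar.

Lemma cde_mixtureE (R : realFieldType) (n : nat) (alpha : R) (c r : 'cV[R]_n) :
  cde_mixture alpha c r = (alpha *: c) *m r^T + ((1 - alpha) * n%:R^-1)%:M.
Proof. by rewrite /cde_mixture scalemxAl scale_scalar_mx. Qed.

Lemma uniq3P (T : eqType) (i j k : T) :
  uniq [:: i; j; k] -> [/\ i != j, j != k & k != i].
Proof.
rewrite /= !inE !negb_or -!andbA => /and4P[ij ik jk _].
by split; rewrite // eq_sym.
Qed.

Theorem theorem5p1 (R : realFieldType) (I : nat) (hI : (3 <= I)%N)
    (alpha : R) (c r : 'cV[R]_I)
    (hc : prob_vec c) (hr : prob_vec r)
    (ha0 : 0 <= alpha) (ha1 : alpha <= 1) :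
  let P := cde_mixture alpha c r in
  (forall i j k l : 'I_I, uniq [:: i; j; k; l] -> b_poly P i j k l = 0) /\
  (forall i j k : 'I_I, uniq [:: i; j; k] -> t_poly P i j k = 0) /\
  (forall i j k l m n : 'I_I,
      (i, j) != (k, l) -> i != j -> k != l ->
      m \notin [:: i; j] -> n \notin [:: k; l] -> m != n ->
      f_poly P i j k l m n = 0) /\
  (forall i j k : 'I_I, i != j -> k \notin [:: i; j] -> g_poly P i j k = 0) /\
  (forall i j k : 'I_I, uniq [:: i; j; k] -> h_poly P i j k = 0).
Proof.
rewrite /= cde_mixtureE; split; [|split; [|split; [|split]]].
- move=> i j k l /=; rewrite !inE !negb_or -!andbA.
  case/and4P=> ij _ il /and4P[jk _ kl _].
  by apply: b_poly_rank1_scalar; rewrite // eq_sym.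
- by move=> i j k /uniq3P[ij jk ki]; apply: t_poly_rank1_scalar.
- by move=> i j k l m n _ ij kl mij nkl _; apply: f_poly_rank1_scalar.
- exact: g_poly_rank1_scalar.
- by move=> i j k /uniq3P[ij jk ki]; apply: h_poly_rank1_scalar.
Qed.
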